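(* Let $n\ge 2$ and let $G$ be a tree on $n$ vertices. Then $\mathrm{irr}_t(G)\ge 2n-4$, with equality if and only if $G\cong P_n$.
   Context: For a graph $G=(V,E)$ and $w\in V$, $d_G(w)$ is the degree of $w$. The total irregularity is $\mathrm{irr}_t(G)=\frac12\sum_{x,y\in V}|d_G(x)-d_G(y)|$, where the sum runs over all ordered pairs of vertices. $P_n$ denotes the path on $n$ vertices. *)

From mathcomp Require Import all_boot all_order all_algebra.
Import IntDist.
Set Implicit Arguments. Unset Strict Implicit. Unset Printing Implicit Defensive.

Definition simple_graph (T : finType) (e : rel T) : Prop :=
  symmetric e /\ irreflexive e.

Definition deg (T : finType) (e : rel T) (w : T) : nat := #|[set y | e w y]|.

Definition connected (T : finType) (e : rel T) : Prop :=
  forall x y : T, connect e x y.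

Definition acyclic (T : finType) (e : rel T) : Prop :=
  forall p : seq T, 2 < size p -> uniq p -> ~~ cycle e p.

Definition is_tree (T : finType) (e : rel T) : Prop :=
  simple_graph e /\ connected e /\ acyclic e.

(* Total irregularity: (1/2) * sum over ordered pairs (x,y) of |d(x) - d(y)|.
   The double sum is even (it is symmetric with zero diagonal), so the
   natural-number halving is exact. *)
Definition irr_t (T : finType) (e : rel T) : nat :=
  (\sum_(x : T) \sum_(y : T) `|deg e x - deg e y|%N) %/ 2.

Definition path_rel (n : nat) : rel 'I_n :=
  fun i j => (i.+1 == j :> nat) || (j.+1 == i :> nat).

Definition graph_iso (T T' : finType) (e : rel T) (e' : rel T') : Prop :=
  exists f : T -> T', bijective f /\ forall x y, e' (f x) (f y) = e x y.

From mathcomp Require Import all_boot all_algebra zify.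
Import IntDist.
Set Implicit Arguments. Unset Strict Implicit. Unset Printing Implicit Defensive.

(* A tree on n >= 2 vertices has two leaves a, b and no isolated vertex, so the
   ordered pairs involving a or b contribute exactly 4 * sum_x (d x - 1) to the
   double sum of |d x - d y|; as a connected graph has at least n - 1 edges,
   this is at least 4 (n - 2), giving irr_t >= 2n - 4.  In the equality case
   the double sum over the other vertices is at most 1, hence 0 by symmetry, so
   they share one degree, which the edge count forces to be 2; a connected
   graph of maximum degree 2 with a leaf is the path traced by a maximal path
   starting at that leaf. *)

Section DistanceSum.
Variables (T : finType) (d : T -> nat) (a b : T).
Hypothesis neq_ab : a != b.
Local Notation inner x := ((x != a) && (x != b)).

Lemma big_split_two (F : T -> nat) :
  \sum_x F x = F a + F b + \sum_(x | inner x) F x.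
Proof.
rewrite (bigD1 a) //= (bigD1 b) 1?eq_sym //= addnA.
by congr (_ + _ + _); apply: eq_bigl => x; rewrite andbC.
Qed.

Lemma card_inner : \sum_(x | inner x) 1 = #|T| - 2.
Proof. by have := big_split_two (fun=> 1); rewrite sum1_card => ->; lia. Qed.

Hypotheses (da : d a = 1) (db : d b = 1).

Lemma sum_inner_pred : \sum_(x | inner x) (d x - 1) = \sum_x (d x - 1).
Proof. by rewrite (big_split_two (fun x => d x - 1)) da db. Qed.

Hypothesis d_gt0 : forall x, 0 < d x.

(* A vertex of value [1] contributes [d y - 1] against every [y]; the two such
   vertices [a], [b] thus produce four copies of [\sum_y (d y - 1)]. *)
Lemma sum_distn_two_ones :
  \sum_x \sum_y `|d x - d y| =
  4 * \sum_x (d x - 1) + \sum_(x | inner x) \sum_(y | inner y) `|d x - d y|.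
Proof.
have distn_one c (P : pred T) : d c = 1 ->
    \sum_(y | P y) `|d c - d y| = \sum_(y | P y) (d y - 1) /\
    \sum_(y | P y) `|d y - d c| = \sum_(y | P y) (d y - 1).
  by move=> dc; split; apply: eq_bigr => y _; have := d_gt0 y; lia.
have [_ a_r] := distn_one a xpredT da; have [_ b_r] := distn_one b xpredT db.
have [a_il _] := distn_one a (fun y => inner y) da.
have [b_il _] := distn_one b (fun y => inner y) db.
under eq_bigr => x _ do rewrite (big_split_two (fun y => `|d x - d y|)).
rewrite big_split big_split /= (big_split_two (fun x => \sum_(y | inner y) _)).
rewrite a_r b_r a_il b_il !sum_inner_pred /=; lia.
Qed.

Hypothesis inner_distn_le1 :
  \sum_(x | inner x) \sum_(y | inner y) `|d x - d y| <= 1.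

(* The double sum is symmetric, so one unequal pair already contributes [2]. *)
Lemma inner_const x y : inner x -> inner y -> d x = d y.
Proof.
move=> ix iy; apply/eqP/negPn/negP => neq_d.
have neq_xy : x != y by apply: contraNneq neq_d => ->.
have row_ge u v : inner v -> `|d u - d v| <= \sum_(y | inner y) `|d u - d y|.
  by move=> iv; rewrite (bigD1 v) //= leq_addr.
have two_rows : \sum_(z | inner z) `|d x - d z| + \sum_(z | inner z) `|d y - d z| <= 1.
  apply: leq_trans inner_distn_le1.
  rewrite [X in _ <= X](bigD1 x) //= [X in _ <= _ + X](bigD1 y) /=.
    by rewrite addnA leq_addr.
  by rewrite iy eq_sym neq_xy.
have := row_ge x y iy; have := row_ge y x ix.
move/eqP: neq_d; lia.
Qed.

Lemma le2_of_sum_pred : \sum_x (d x - 1) = #|T| - 2 -> forall x, d x <= 2.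
Proof.
move=> sum_pred x.
have [-> | xa] := eqVneq x a; first by rewrite da.
have [-> | xb] := eqVneq x b; first by rewrite db.
have ix : inner x by rewrite xa xb.
have : \sum_(y | inner y) (d y - 1) = (#|T| - 2) * (d x - 1).
  rewrite -card_inner big_distrl /=; apply: eq_bigr => y iy.
  by rewrite mul1n (inner_const iy ix).
have : 1 <= #|T| - 2 by rewrite -card_inner (bigD1 x).
rewrite sum_inner_pred sum_pred; have := d_gt0 x; nia.
Qed.

End DistanceSum.

Section ConnectedDegrees.
Variables (T : finType) (e : rel T).
Hypothesis conn : connected e.

Lemma connected_deg_gt0 v : 2 <= #|T| -> 0 < deg e v.
Proof.
move=> n2; have : 0 < #|predC1 v| by rewrite cardC1; lia.
case/card_gt0P => y; rewrite inE => yv.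
have /connectP[[|z s] /=] := conn v y; first by move=> _ yv'; rewrite yv' eqxx in yv.
by case/andP=> evz _ _; apply/card_gt0P; exists z; rewrite inE.
Qed.

Hypothesis esym : symmetric e.
Variable r : T.

Definition walk_to_root v m :=
  [exists s : m.-tuple T, path e v s && (last v s == r)].

Lemma exists_walk_to_root v : exists m, walk_to_root v m.
Proof.
have /connectP[s ps lr] := conn v r.
by exists (size s); apply/existsP; exists (in_tuple s); rewrite /= ps -lr eqxx.
Qed.

Definition root_dist v := ex_minn (exists_walk_to_root v).

Lemma exists_closer_nbr v : v != r -> exists y, e v y && (root_dist y < root_dist v).
Proof.
move=> vr; rewrite /root_dist.
case: ex_minnP => m /existsP[[s /eqP size_s] /= /andP[ps /eqP lr]] minm.
case: s size_s ps lr => [|y s] /= size_s; first by move=> _ vr'; rewrite vr' eqxx in vr.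
case/andP=> evy ps lr; exists y; rewrite evy /=.
case: ex_minnP => m' _ minm'.
have : walk_to_root y (size s) by apply/existsP; exists (in_tuple s); rewrite /= ps lr eqxx.
by move/minm'; rewrite -size_s.
Qed.

Definition parent v := odflt v [pick y | e v y && (root_dist y < root_dist v)].

Lemma parentP v : v != r -> e v (parent v) && (root_dist (parent v) < root_dist v).
Proof.
move=> vr; rewrite /parent; case: pickP => [y //|no_nbr].
by have [y] := exists_closer_nbr vr; rewrite no_nbr.
Qed.

Definition children v := [set w | (w != r) && (parent w == v)].

(* The parent of [v] is a neighbour of [v] that is not one of its children. *)
Lemma card_children_le_deg v : #|children v| + (v != r) <= deg e v.
Proof.
have sub_nbr : children v \subset [set y | e v y].
  apply/subsetP => w; rewrite !inE => /andP[wr /eqP pw].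
  by have := parentP wr; rewrite pw esym => /andP[].
have [_ | vr] := eqVneq v r; first by rewrite /= addn0 subset_leq_card.
have [ep lt_p] := andP (parentP vr).
have p_notin : parent v \notin children v.
  rewrite inE; apply/negP => /andP[pr /eqP pp].
  by have := parentP pr; rewrite pp => /andP[_]; lia.
have : parent v |: children v \subset [set y | e v y].
  by rewrite subUset sub_nbr andbT sub1set inE.
by move/subset_leq_card; rewrite cardsU1 p_notin addnC.
Qed.

Lemma sum_nonroot : \sum_w ((w != r) : nat) = #|T|.-1.
Proof.
by rewrite -(cardC1 r) -sum1_card [RHS]big_mkcond; apply: eq_bigr => w _; rewrite !inE.
Qed.

Lemma sum_card_children : \sum_v #|children v| = #|T|.-1.
Proof.
rewrite -sum_nonroot.
under eq_bigr => v _ do rewrite -sum1_card big_mkcond /=.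
rewrite exchange_big /=; apply: eq_bigr => w _.
rewrite (bigD1 (parent w)) //= big1 => [|v /negPf pv]; last first.
  by rewrite !inE (eq_sym (parent w)) pv andbF.
by rewrite !inE eqxx andbT addn0; case: (w != r).
Qed.

Lemma connected_sum_deg : 2 * #|T|.-1 <= \sum_v deg e v.
Proof.
rewrite mul2n -addnn -{1}sum_card_children -sum_nonroot -big_split /=.
by apply: leq_sum => v _; apply: card_children_le_deg.
Qed.

End ConnectedDegrees.

Lemma exists_maximal_path (T : finType) (e : rel T) (a : T) : exists q : seq T,
  [/\ path e a q, uniq (a :: q) & forall y, e (last a q) y -> y \in a :: q].
Proof.
pose P m := [exists t : m.-tuple T, path e a t && uniq (a :: t)].
have P0 : exists m, P m by exists 0; apply/existsP; exists [tuple].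
have P_le m : P m -> m <= #|T|.
  case/existsP=> t /andP[_ ut].
  by have := max_card (mem (a :: t)); rewrite (card_uniqP ut) /= size_tuple; lia.
have [m /existsP[t /andP[pt ut]] maxm] := ex_maxnP P0 P_le.
exists t; split => // y ey; apply/negPn/negP => ny.
have : P (size (rcons t y)).
  apply/existsP; exists (in_tuple (rcons t y)).
  rewrite /= rcons_path pt ey /= rcons_uniq mem_rcons in_cons.
  move: ut ny; rewrite /= !in_cons negb_or => /andP[a_t ->] /andP[ya ->].
  by rewrite eq_sym (negbTE ya) (negbTE a_t).
by move/maxm; rewrite size_rcons size_tuple; lia.
Qed.

Section MaximalPath.
Variables (T : finType) (e : rel T).
Hypotheses (esym : symmetric e) (eirr : irreflexive e).
Variables (p : seq T) (x0 : T).
Hypotheses (p_sorted : sorted e p) (p_uniq : uniq p).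
Local Notation x i := (nth x0 p i).
Local Notation k := (size p).-1.

Lemma path_adj i : i.+1 < size p -> e (x i) (x i.+1).
Proof. by case: p p_sorted => [|h t] //= /pathP; apply. Qed.

Hypothesis end_closed : forall y, e (x k) y -> y \in p.

(* A neighbour of the end further back than [x k.-1] would close a cycle. *)
Lemma acyclic_path_end_nbr : acyclic e -> 1 < size p ->
  forall y, e (x k) y -> y = x k.-1.
Proof.
move=> acy p2 y ey.
have yp := end_closed ey.
have j_lt : index y p < size p by rewrite index_mem.
move: ey; rewrite -(nth_index x0 yp) => ey.
have [j_lt_k1 | j_gt_k1 | -> //] := ltngtP (index y p) k.-1; last first.
  have idx : index y p = k by lia.
  by rewrite idx eirr in ey.
set j := index y p in j_lt ey j_lt_k1.
have := acy (drop j p); rewrite size_drop drop_uniq // (drop_nth x0 j_lt) /=.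
have -> : 2 < size p - j by lia.
have ps : path e (x j) (drop j.+1 p).
  by have := drop_sorted j p_sorted; rewrite (drop_nth x0 j_lt).
rewrite rcons_path ps /=.
have -> : last (x j) (drop j.+1 p) = x k.
  rewrite (last_nth x0) -(drop_nth x0 j_lt) nth_drop size_drop.
  by have -> : j + (size p - j.+1) = k by lia.
by move/(_ isT isT); rewrite ey.
Qed.

Lemma acyclic_path_end_deg : acyclic e -> 1 < size p -> deg e (x k) = 1.
Proof.
move=> acy p2; rewrite /deg.
have -> : [set y | e (x k) y] = [set x k.-1].
  apply/setP => y; rewrite !inE; apply/idP/eqP => [|->].
    exact: acyclic_path_end_nbr.
  rewrite esym; have -> : k = k.-1.+1 by lia.
  by apply: path_adj; lia.
by rewrite cards1.
Qed.

Hypotheses (deg_le2 : forall y, deg e y <= 2) (deg_head : deg e (x 0) = 1).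

Lemma path_nbr i y : i < k -> e (x i) y -> y = x i.+1 \/ (0 < i /\ y = x i.-1).
Proof.
move=> ik ey.
have next_nbr : x i.+1 \in [set z | e (x i) z] by rewrite inE path_adj //; lia.
have y_nbr : y \in [set z | e (x i) z] by rewrite inE.
case: i ik ey next_nbr y_nbr => [|i] ik ey next_nbr y_nbr.
  have : [set x 1] = [set z | e (x 0) z].
    by apply/eqP; rewrite eqEcard sub1set next_nbr cards1; apply: eq_leq deg_head.
  by move/setP/(_ y); rewrite y_nbr inE => /eqP; left.
have prev_nbr : x i \in [set z | e (x i.+1) z] by rewrite inE esym path_adj //; lia.
have neq : x i.+2 != x i.
  have lt2 : i.+2 < size p by lia.
  have lt0 : i < size p by lia.
  by rewrite (nth_uniq x0 lt2 lt0 p_uniq); lia.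
have : [set x i.+2; x i] = [set z | e (x i.+1) z].
  apply/eqP; rewrite eqEcard cards2 neq subUset !sub1set next_nbr prev_nbr.
  exact: deg_le2.
by move/setP/(_ y); rewrite y_nbr !inE => /orP[] /eqP ->; [left | right].
Qed.

Lemma maximal_path_closed u v : u \in p -> e u v -> v \in p.
Proof.
move=> u_p euv; have u_lt : index u p < size p by rewrite index_mem.
rewrite -(nth_index x0 u_p) in euv.
have [u_lt_k | ] := ltnP (index u p) k; last first.
  by move=> u_ge_k; apply: end_closed; have <- : index u p = k by lia.
have [-> | [_ ->]] := path_nbr u_lt_k euv; apply: mem_nth.
  by rewrite -ltn_predRL.
exact: leq_ltn_trans (leq_pred _) u_lt.
Qed.

Hypotheses (conn : connected e) (p_neq0 : 0 < size p).

Lemma mem_maximal_path y : y \in p.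
Proof.
have /connectP[s ps ->] := conn (x 0) y.
have : x 0 \in p by apply: mem_nth.
elim: s (x 0) ps => [|v s IHs] u //= /andP[euv ps] u_p.
exact: IHs ps (maximal_path_closed u_p euv).
Qed.

Lemma size_maximal_path : size p = #|T|.
Proof.
rewrite -(card_uniqP p_uniq) cardT; apply: eq_cardT => y.
by rewrite mem_maximal_path.
Qed.

Lemma path_index_subproof y : index y p < #|T|.
Proof. by rewrite -size_maximal_path index_mem mem_maximal_path. Qed.

Definition path_index y : 'I_#|T| := Ordinal (path_index_subproof y).

Lemma path_index_adj y z : e y z = path_rel (path_index y) (path_index z).
Proof.
wlog le_yz : y z / index y p <= index z p.
  move=> wlog_le; have [/wlog_le // | /ltnW/wlog_le] := leqP (index y p) (index z p).
  by rewrite esym /path_rel orbC.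
have nth_idx w : x (index w p) = w by rewrite nth_index ?mem_maximal_path.
have idx_nth m : m < size p -> index (x m) p = m by move=> ?; apply: index_uniq.
have z_lt : index z p < size p by rewrite index_mem mem_maximal_path.
rewrite /path_rel /=; apply/idP/idP => [eyz | /orP[] /eqP idxE]; last 2 first.
- by rewrite -(nth_idx y) -(nth_idx z) -idxE path_adj ?idxE.
- by move: le_yz; rewrite -idxE ltnn.
have y_lt_k : index y p < k.
  rewrite ltnNge; apply: contraL eyz => k_le_y.
  have idx_eq : index y p = index z p by lia.
  by rewrite -(nth_idx y) idx_eq nth_idx eirr.
rewrite -(nth_idx y) in eyz.
have y_lt : index y p < size p by rewrite index_mem mem_maximal_path.
have [zE | [y_gt0 zE]] := path_nbr y_lt_k eyz; rewrite zE idx_nth.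
- by rewrite eqxx.
- by rewrite -ltn_predRL.
- by rewrite prednK ?eqxx ?orbT.
- exact: leq_ltn_trans (leq_pred _) y_lt.
Qed.

Lemma maximal_path_iso : graph_iso e (@path_rel #|T|).
Proof.
exists path_index; split; last by move=> y z; rewrite path_index_adj.
apply: inj_card_bij; last by rewrite card_ord.
move=> y z /(congr1 val) /= idxE.
by rewrite -(nth_index x0 (mem_maximal_path y)) idxE nth_index ?mem_maximal_path.
Qed.

End MaximalPath.

Lemma exists_leaf_path (T : finType) (e : rel T) s : 2 <= #|T| -> is_tree e ->
  exists q, [/\ path e s q, uniq (s :: q), q != [::] & deg e (last s q) = 1].
Proof.
move=> n2 [[esym eirr] [conn acy]].
have [q [ps us end_closed]] := exists_maximal_path e s.
have q_neq0 : q != [::].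
  apply/eqP => q0; have /card_gt0P[y] := connected_deg_gt0 conn s n2.
  rewrite inE => esy; have := end_closed y; rewrite q0 /= esy mem_seq1.
  by move=> /(_ isT) /eqP ys; rewrite ys eirr in esy.
exists q; split => //.
have sq2 : 1 < size (s :: q) by case: (q) q_neq0.
have := acyclic_path_end_deg esym eirr (x0 := s) (p := s :: q) ps us _ acy sq2.
by rewrite /= -last_nth; apply.
Qed.

Lemma two_leaves (T : finType) (e : rel T) : 2 <= #|T| -> is_tree e ->
  exists a b, [/\ a != b, deg e a = 1 & deg e b = 1].
Proof.
move=> n2 tree; have /card_gt0P[s _] : 0 < #|T| by lia.
have [q [_ _ _ da]] := exists_leaf_path s n2 tree.
have [q' [_ /= /andP[a_notin _] q'_neq0 db]] := exists_leaf_path (last s q) n2 tree.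
exists (last s q), (last (last s q) q'); split => //.
by apply: contraNneq a_notin => ->; case: q' {db} q'_neq0 => //= y t _; rewrite mem_last.
Qed.

Lemma deg_bij (T T' : finType) (e : rel T) (e' : rel T') (f : T -> T') :
  bijective f -> (forall x y, e' (f x) (f y) = e x y) ->
  forall x, deg e' (f x) = deg e x.
Proof.
move=> [g fK gK] f_hom x; rewrite /deg -[RHS](card_imset _ (can_inj fK)).
apply: eq_card => y.
by rewrite inE -{1 2}(gK y) f_hom (mem_imset _ _ (can_inj fK)) inE.
Qed.

Lemma irr_t_iso (T T' : finType) (e : rel T) (e' : rel T') :
  graph_iso e e' -> irr_t e = irr_t e'.
Proof.
case=> f [f_bij f_hom]; rewrite /irr_t (reindex f (onW_bij _ f_bij)); congr (_ %/ 2).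
apply: eq_bigr => x _; rewrite (reindex f (onW_bij _ f_bij)).
by apply: eq_bigr => y _; rewrite !(deg_bij f_bij f_hom).
Qed.

Lemma sum_ord_eqn n m : \sum_(j < n) (m == j :> nat) = (m < n).
Proof.
elim: n => [|n IHn]; first by rewrite big_ord0.
rewrite big_ord_recr /= IHn; case: ltngtP => [lt_mn | lt_nm | ->].
- by rewrite ltnS ltnW.
- by rewrite ltnS leqNgt lt_nm.
- by rewrite ltnSn.
Qed.

Lemma deg_path_rel n (i : 'I_n) : deg (@path_rel n) i = (i.+1 < n) + (0 < i).
Proof.
rewrite /deg -sum1_card big_mkcond /=.
transitivity (\sum_(j < n) ((i.+1 == j :> nat) + ((i.-1 == j :> nat) && (0 < i)))).
  apply: eq_bigr => j _; rewrite inE /path_rel.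
  by case: (eqVneq (i.+1 : nat) j); case: (eqVneq (j.+1 : nat) i) => /=; lia.
rewrite big_split /= sum_ord_eqn; case: (posnP i) => [-> | i_gt0].
  by rewrite big1 // => j _; rewrite andbF.
under eq_bigr do rewrite andbT.
by rewrite sum_ord_eqn (leq_ltn_trans (leq_pred _) (ltn_ord i)).
Qed.

Lemma irr_t_path n : 2 <= n -> irr_t (@path_rel n) = 2 * n - 4.
Proof.
case: n => [|[|n]] // _; set d := deg (@path_rel n.+2).
have d0 : d ord0 = 1 by rewrite /d deg_path_rel.
have dmax : d ord_max = 1 by rewrite /d deg_path_rel /= ltnn.
have d_inner (i : 'I_n.+2) : (i != ord0) && (i != ord_max) -> d i = 2.
  case/andP => i_neq0 i_neq_max.
  have i_gt0 : 0 < i by rewrite lt0n; exact: i_neq0.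
  have i_lt : i.+1 < n.+2 by rewrite ltnS ltn_neqAle -ltnS ltn_ord andbT; exact: i_neq_max.
  by rewrite /d deg_path_rel i_gt0 i_lt.
have d_gt0 i : 0 < d i.
  have [-> | i_neq0] := eqVneq i ord0; first by rewrite d0.
  have [-> | i_neq_max] := eqVneq i ord_max; first by rewrite dmax.
  by rewrite d_inner ?i_neq0.
have neq_ends : ord0 != ord_max :> 'I_n.+2 by rewrite -val_eqE.
rewrite /irr_t (sum_distn_two_ones neq_ends d0 dmax d_gt0).
rewrite [X in _ + X]big1 => [|i i_inner]; last first.
  by rewrite big1 // => j j_inner; rewrite !d_inner ?distnn.
rewrite -(sum_inner_pred neq_ends d0 dmax).
under eq_bigr => i i_inner do rewrite d_inner //.
by rewrite (card_inner neq_ends) card_ord; lia.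
Qed.

Lemma path_iso_of_deg_le2 (T : finType) (e : rel T) (a : T) :
  simple_graph e -> connected e -> (forall y, deg e y <= 2) -> deg e a = 1 ->
  graph_iso e (@path_rel #|T|).
Proof.
move=> [esym eirr] conn deg_le2 da.
have [q [ps us end_closed]] := exists_maximal_path e a.
apply: (maximal_path_iso esym eirr (p := a :: q) (x0 := a)) => //.
by move=> y; rewrite /= -last_nth; apply: end_closed.
Qed.

Theorem theorem5 (T : finType) (e : rel T) :
  2 <= #|T| -> is_tree e ->
  2 * #|T| - 4 <= irr_t e /\
  (irr_t e = 2 * #|T| - 4 <-> graph_iso e (@path_rel #|T|)).
Proof.
move=> n2 tree; have [[esym eirr] [conn _]] := tree.
have d_gt0 v : 0 < deg e v := connected_deg_gt0 conn v n2.
have [a [b [neq_ab da db]]] := two_leaves n2 tree.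
have sum_pred_ge : #|T| - 2 <= \sum_v (deg e v - 1).
  have sum_deg : \sum_v deg e v = \sum_v (deg e v - 1) + #|T|.
    by rewrite -sum1_card -big_split /=; apply: eq_bigr => v _; rewrite subnK.
  by have := connected_sum_deg conn esym a; rewrite sum_deg; lia.
have := sum_distn_two_ones neq_ab da db d_gt0; set W := (X in _ = _ + X) => sumE.
have irrE : irr_t e = (4 * \sum_v (deg e v - 1) + W) %/ 2 by rewrite /irr_t sumE.
rewrite irrE; split; first lia.
split=> [irr_eq | iso]; last by rewrite -irrE (irr_t_iso iso) irr_t_path.
apply: (path_iso_of_deg_le2 (a := a)) => //.
by apply: (le2_of_sum_pred neq_ab da db d_gt0); lia.
Qed.
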